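(* Let $1<w\le 2$, $h>1$, $k\ge 2$, and let $\frac12\le y_1<\dots<y_n\le h-\frac12$ be uniformly spaced with $y_{i+1}-y_i=\frac1k$ for all $i$. Let $(\mathbf x,\prec)$ be a $\frac1k$-reasonable layout of this instance. If $1<i<n$ and both $s_{i-1}$ and $s_{i+1}$ are in front of $s_i$, then $s_i$ is a standard bad square.
   Context: The instance is the strip $T=[0,w]\times[0,h]$ with the given $y_i$. A layout is a pair $(\mathbf x,\prec)$ where $\mathbf x=(x_1,\dots,x_n)$ with $x_i\in[\frac12,w-\frac12]$, and $\prec$ is a total order on the squares $s_1,\dots,s_n$, where $s_i$ is the closed axis-parallel unit square with centre $(x_i,y_i)$. If $s_i\prec s_j$ we say $s_j$ is in front of $s_i$ and $s_i$ is behind $s_j$. A point $p$ on the boundary of $s_i$ is visible if every square $s_j$ ($j\neq i$) containing $p$ is behind $s_i$, and covered otherwise. The visible perimeter of $s_i$ is the total length of its visible boundary points; the gap of $s_i$ is its visible perimeter minus $2$, the gap of a layout is the minimum gap of its squares, and a layout is $\varepsilon$-reasonable if its gap is larger than $\varepsilon$. A bad square is a square with at least two of its four corners covered; a standard bad square is a bad square one of whose vertical sides is entirely covered. *)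

From HB Require Import structures.
From mathcomp Require Import all_boot all_order all_algebra.
From mathcomp Require Import all_classical all_reals.
From mathcomp Require Import ereal topology normedtype sequences measure lebesgue_measure.
Set Implicit Arguments. Unset Strict Implicit. Unset Printing Implicit Defensive.
Import Order.TTheory GRing.Theory Num.Theory.
Local Open Scope ring_scope.
Local Open Scope classical_set_scope.

Section Layouts.
Variable R : realType.

(* Squares are indexed by 1..n; x, y : nat -> R give the centres (x_i, y_i).
   prec i j means s_i ≺ s_j, i.e. s_j is in front of s_i. *)

Definition idx (n i : nat) : Prop := (1 <= i <= n)%N.

Definition strict_total_order (n : nat) (prec : nat -> nat -> Prop) : Prop :=
  [/\ (forall i, idx n i -> ~ prec i i),
      (forall i j l, idx n i -> idx n j -> idx n l -> prec i j -> prec j l -> prec i l)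
    & (forall i j, idx n i -> idx n j -> i <> j -> prec i j \/ prec j i)].

Definition layout (w : R) (n : nat) (x : nat -> R) (prec : nat -> nat -> Prop) : Prop :=
  (forall i, idx n i -> 1/2 <= x i <= w - 1/2) /\ strict_total_order n prec.

Definition in_sq (x y : nat -> R) (i : nat) (p : R * R) : Prop :=
  `|p.1 - x i| <= 1/2 /\ `|p.2 - y i| <= 1/2.

(* the four sides of s_i, parametrised by t in [0,1]:
   0 = bottom, 1 = right, 2 = top, 3 = left *)
Definition side_pt (x y : nat -> R) (i : nat) (s : 'I_4) (t : R) : R * R :=
  match val s with
  | 0 => (x i - 1/2 + t, y i - 1/2)
  | 1 => (x i + 1/2, y i - 1/2 + t)
  | 2 => (x i - 1/2 + t, y i + 1/2)
  | _ => (x i - 1/2, y i - 1/2 + t)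
  end.

Definition visible n (x y : nat -> R) (prec : nat -> nat -> Prop) (i : nat) (p : R * R) : Prop :=
  forall j, idx n j -> j <> i -> in_sq x y j p -> prec j i.

Definition covered n (x y : nat -> R) (prec : nat -> nat -> Prop) (i : nat) (p : R * R) : Prop :=
  ~ visible n x y prec i p.

Definition visible_side_length n (x y : nat -> R) (prec : nat -> nat -> Prop)
    (i : nat) (s : 'I_4) : \bar R :=
  (@lebesgue_measure R) [set t : R | 0 <= t <= 1 /\ visible n x y prec i (side_pt x y i s t)].

Definition visible_perimeter n (x y : nat -> R) (prec : nat -> nat -> Prop) (i : nat) : \bar R :=
  (\sum_(s < 4) visible_side_length n x y prec i s)%E.

Definition gap_sq n (x y : nat -> R) (prec : nat -> nat -> Prop) (i : nat) : \bar R :=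
  (visible_perimeter n x y prec i - 2%:E)%E.

(* the gap of the layout (minimum of the gaps) is larger than eps *)
Definition reasonable (eps : R) n (x y : nat -> R) (prec : nat -> nat -> Prop) : Prop :=
  forall i, idx n i -> (eps%:E < gap_sq n x y prec i)%E.

Definition corner (x y : nat -> R) (i : nat) (c : 'I_4) : R * R :=
  match val c with
  | 0 => (x i - 1/2, y i - 1/2)
  | 1 => (x i + 1/2, y i - 1/2)
  | 2 => (x i + 1/2, y i + 1/2)
  | _ => (x i - 1/2, y i + 1/2)
  end.

Definition bad_square n (x y : nat -> R) (prec : nat -> nat -> Prop) (i : nat) : Prop :=
  exists c1 c2 : 'I_4, c1 <> c2 /\
    covered n x y prec i (corner x y i c1) /\ covered n x y prec i (corner x y i c2).

Definition standard_bad_square n (x y : nat -> R) (prec : nat -> nat -> Prop) (i : nat) : Prop :=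
  bad_square n x y prec i /\
  ((forall t, 0 <= t <= 1 -> covered n x y prec i (x i - 1/2, y i - 1/2 + t)) \/
   (forall t, 0 <= t <= 1 -> covered n x y prec i (x i + 1/2, y i - 1/2 + t))).

End Layouts.

From HB Require Import structures.
From mathcomp Require Import all_boot all_order all_algebra.
From mathcomp Require Import all_classical all_reals.
From mathcomp Require Import ereal topology normedtype sequences measure lebesgue_measure.
From mathcomp Require Import lra zify.
Set Implicit Arguments. Unset Strict Implicit.
Import Order.TTheory GRing.Theory Num.Theory.
Local Open Scope ring_scope.

(* Let s_{i-1} and s_{i+1} lie at heights y_i - 1/k and y_i + 1/k, both in front of s_i,
   and note that all centres are within w - 1 <= 1 of each other horizontally.  If both
   neighbours are on the same side of s_i, the lower one covers that vertical side of s_i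
   up to height 1 - 1/k and the upper one covers the rest, so s_i is standard bad.  If they
   are on opposite sides, each side of s_i meets a neighbour, which leaves visible at most
   the horizontal offset of that neighbour on the bottom and top sides and at most 1/k on
   each vertical side: the visible perimeter is at most |x_{i-1} - x_{i+1}| + 2/k <= 1 + 2/k,
   contradicting a gap larger than 1/k. *)

Local Notation bottom_side := (@Ordinal 4 0 isT).
Local Notation right_side := (@Ordinal 4 1 isT).
Local Notation top_side := (@Ordinal 4 2 isT).
Local Notation left_side := (@Ordinal 4 3 isT).

Lemma layout_centre_dist (R : realType) (w : R) n x prec i j :
  layout w n x prec -> idx n i -> idx n j -> `|x i - x j| <= w - 1.
Proof.
case=> Hx _ Ii Ij; have /andP[? ?] := Hx i Ii; have /andP[? ?] := Hx j Ij.
by rewrite ler_norml; apply/andP; split; lra.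
Qed.

Lemma normD_opposite_sign (R : realDomainType) (u v : R) :
  (0 <= u) != (0 <= v) -> `|u| + `|v| = `|u - v|.
Proof.
have [u0|u0] := lerP 0 u; have [v0|v0] := lerP 0 v => // _.
- by rewrite (ger0_norm u0) (ltr0_norm v0) ger0_norm; lra.
- by rewrite (ltr0_norm u0) (ger0_norm v0) ltr0_norm; lra.
Qed.

Section Visibility.
Variables (R : realType) (n : nat) (x y : nat -> R) (prec : nat -> nat -> Prop).

Lemma visible_perimeterE i :
  visible_perimeter n x y prec i =
  (visible_side_length n x y prec i bottom_side + visible_side_length n x y prec i right_side
   + visible_side_length n x y prec i top_side + visible_side_length n x y prec i left_side)%E.
Proof. by rewrite /visible_perimeter !big_ord_recr big_ord0 /= add0e. Qed.

Lemma visible_side_length_le_itv i s (c d : R) : c <= d ->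
  (forall t, 0 <= t <= 1 -> visible n x y prec i (side_pt x y i s t) -> c <= t <= d) ->
  (visible_side_length n x y prec i s <= (d - c)%:E)%E.
Proof.
move=> cd Hvis; apply: (@le_trans _ _ ((@lebesgue_measure R) `[c, d]%classic)).
  apply: le_mu_ext => t /= [t01 V]; rewrite in_itv /=; exact: Hvis.
by rewrite lebesgue_measure_itv /= lte_fin; case: ltP => [_|]; rewrite ?EFinB // lee_fin subr_ge0.
Qed.

(* A square covering the part of a side within 1/2 of the parameter 1/2 + d leaves visible
   only the part of length |d| sticking out of it. *)
Lemma visible_side_length_le_shift i s (d : R) : `|d| <= 1 ->
  (forall t, 0 <= t <= 1 -> `|t - 1/2 - d| <= 1/2 ->
     covered n x y prec i (side_pt x y i s t)) ->
  (visible_side_length n x y prec i s <= `|d|%:E)%E.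
Proof.
rewrite ler_norml => /andP[d_ge d_le] Hcov.
have Hcov' t : 0 <= t <= 1 -> visible n x y prec i (side_pt x y i s t) ->
    ~ (d <= t <= 1 + d).
  move=> t01 V /andP[? ?]; apply: (Hcov t t01) V.
  by rewrite ler_norml; apply/andP; split; lra.
have [d0|d0] := lerP 0 d.
- rewrite ger0_norm // -[X in X%:E]subr0; apply: visible_side_length_le_itv => // t t01 V.
  have := Hcov' t t01 V; move: t01 => /andP[? ?].
  by case: (lerP t d) => [? _|? []]; [apply/andP; split | apply/andP; split; lra].
- rewrite ltr0_norm // (_ : - d = 1 - (1 + d)); last by lra.
  apply: visible_side_length_le_itv => [|t t01 V]; first by lra.
  have := Hcov' t t01 V; move: t01 => /andP[? ?].
  by case: (lerP (1 + d) t) => [? _|? []]; [apply/andP; split | apply/andP; split; lra].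
Qed.

Lemma standard_bad_of_vertical_side_covered i :
  (forall t, 0 <= t <= 1 -> covered n x y prec i (x i - 1/2, y i - 1/2 + t)) \/
  (forall t, 0 <= t <= 1 -> covered n x y prec i (x i + 1/2, y i - 1/2 + t)) ->
  standard_bad_square n x y prec i.
Proof.
move=> Hside; split=> //.
have top_t : y i - 1/2 + 1 = y i + 1/2 by lra.
have t0 : 0 <= (0 : R) <= 1 by apply/andP; split; lra.
have t1 : 0 <= (1 : R) <= 1 by apply/andP; split; lra.
case: Hside => C.
- exists left_side, bottom_side; split=> //; rewrite /corner /=.
  by split; [have := C 1 t1; rewrite top_t | have := C 0 t0; rewrite addr0].
- exists right_side, top_side; split=> //; rewrite /corner /=.
  by split; [have := C 0 t0; rewrite addr0 | have := C 1 t1; rewrite top_t].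
Qed.

Hypothesis prec_order : strict_total_order n prec.

Lemma covered_in_front i j p :
  idx n i -> idx n j -> prec i j -> in_sq x y j p -> covered n x y prec i p.
Proof.
case: prec_order => irr tr _ Ii Ij Pij Hp V.
have ji : j <> i by move=> E; apply: (irr i Ii); rewrite -{2}E.
exact: irr i Ii (tr _ _ _ Ii Ij Ii Pij (V j Ij ji Hp)).
Qed.

Section SideAgainstFrontSquare.
Variables (i j : nat).
Hypotheses (Ii : idx n i) (Ij : idx n j) (Pij : prec i j).

Lemma visible_bottom_length_le :
  `|x j - x i| <= 1 -> `|y i - 1/2 - y j| <= 1/2 ->
  (visible_side_length n x y prec i bottom_side <= `|x j - x i|%:E)%E.
Proof.
move=> dx dy; apply: visible_side_length_le_shift => // t _ Ht.
apply: covered_in_front Ii Ij Pij _; split => //=.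
by rewrite (_ : _ - x j = t - 1/2 - (x j - x i)) //; lra.
Qed.

Lemma visible_top_length_le :
  `|x j - x i| <= 1 -> `|y i + 1/2 - y j| <= 1/2 ->
  (visible_side_length n x y prec i top_side <= `|x j - x i|%:E)%E.
Proof.
move=> dx dy; apply: visible_side_length_le_shift => // t _ Ht.
apply: covered_in_front Ii Ij Pij _; split => //=.
by rewrite (_ : _ - x j = t - 1/2 - (x j - x i)) //; lra.
Qed.

Lemma visible_right_length_le :
  `|y j - y i| <= 1 -> `|x i + 1/2 - x j| <= 1/2 ->
  (visible_side_length n x y prec i right_side <= `|y j - y i|%:E)%E.
Proof.
move=> dy dx; apply: visible_side_length_le_shift => // t _ Ht.
apply: covered_in_front Ii Ij Pij _; split => //=.
by rewrite (_ : _ - y j = t - 1/2 - (y j - y i)) //; lra.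
Qed.

Lemma visible_left_length_le :
  `|y j - y i| <= 1 -> `|x i - 1/2 - x j| <= 1/2 ->
  (visible_side_length n x y prec i left_side <= `|y j - y i|%:E)%E.
Proof.
move=> dy dx; apply: visible_side_length_le_shift => // t _ Ht.
apply: covered_in_front Ii Ij Pij _; split => //=.
by rewrite (_ : _ - y j = t - 1/2 - (y j - y i)) //; lra.
Qed.

End SideAgainstFrontSquare.

Definition in_front_at i j (d : R) := [/\ idx n j, prec i j & y j = y i + d].

Section FrontNeighbours.
Variables (i a b : nat) (e : R).
Hypotheses (Ii : idx n i) (Ha : in_front_at i a (- e)) (Hb : in_front_at i b e).

(* s_a covers the segment up to height y_i + 1/2 - e and s_b covers it from height
   y_i - 1/2 + e on; these overlap because e <= 1/2. *)
Lemma vertical_segment_covered u : 0 <= e <= 1/2 ->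
  `|u - x a| <= 1/2 -> `|u - x b| <= 1/2 ->
  forall t : R, 0 <= t <= 1 -> covered n x y prec i (u, y i - 1/2 + t).
Proof.
case: Ha Hb => Ia Pia ya [Ib Pib yb] /andP[e_ge0 e_le] ua ub t /andP[t0 t1].
have [low|high] := lerP t (1 - e).
- apply: covered_in_front Ii Ia Pia _; split=> //=.
  by rewrite ya ler_norml; apply/andP; split; lra.
- apply: covered_in_front Ii Ib Pib _; split=> //=.
  by rewrite yb ler_norml; apply/andP; split; lra.
Qed.

Lemma standard_bad_of_front_neighbours_same_side : 0 <= e <= 1/2 ->
  `|x a - x i| <= 1 -> `|x b - x i| <= 1 ->
  (x i <= x a) = (x i <= x b) -> standard_bad_square n x y prec i.
Proof.
move=> e01; rewrite !ler_norml => /andP[? ?] /andP[? ?] same.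
apply: standard_bad_of_vertical_side_covered.
move: same; have [ia|ai] := lerP (x i) (x a).
- move=> /esym ib; right; apply: vertical_segment_covered => //;
    by rewrite ler_norml; apply/andP; split; lra.
- move=> /esym/negbT; rewrite -ltNge => bi; left; apply: vertical_segment_covered => //;
    by rewrite ler_norml; apply/andP; split; lra.
Qed.

Lemma visible_perimeter_le_front_neighbours_opposite : 0 <= e <= 1/2 ->
  `|x a - x i| <= 1 -> `|x b - x i| <= 1 ->
  (x i <= x a) != (x i <= x b) ->
  (visible_perimeter n x y prec i <= (`|x a - x b| + 2 * e)%:E)%E.
Proof.
case: Ha Hb => Ia Pia ya [Ib Pib yb] /andP[e_ge0 e_le] xa xb opposite.
have dya : `|y a - y i| = e by rewrite ya addrAC subrr add0r normrN ger0_norm.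
have dyb : `|y b - y i| = e by rewrite yb addrAC subrr add0r ger0_norm.
have dy1 : e <= 1 by lra.
have Hbottom := visible_bottom_length_le Ii Ia Pia xa.
have Htop := visible_top_length_le Ii Ib Pib xb.
have [Hright Hleft] : (visible_side_length n x y prec i right_side <= e%:E)%E /\
    (visible_side_length n x y prec i left_side <= e%:E)%E.
  move: xa xb; rewrite !ler_norml => /andP[? ?] /andP[? ?].
  move: opposite; have [ia|ai] := lerP (x i) (x a); have [ib|bi] := lerP (x i) (x b) => // _.
  - split; [rewrite -dya; apply: visible_right_length_le | rewrite -dyb; apply: visible_left_length_le];
      by rewrite ?dya ?dyb // ler_norml; apply/andP; split; lra.
  - split; [rewrite -dyb; apply: visible_right_length_le | rewrite -dya; apply: visible_left_length_le];
      by rewrite ?dya ?dyb // ler_norml; apply/andP; split; lra.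
have Hsum : `|x a - x i| + `|x b - x i| = `|x a - x b|.
  by rewrite normD_opposite_sign ?subr_ge0 // opprB addrA subrK.
have dyi : `|y i - 1/2 - y a| <= 1/2 by rewrite ya ler_norml; apply/andP; split; lra.
have dyt : `|y i + 1/2 - y b| <= 1/2 by rewrite yb ler_norml; apply/andP; split; lra.
rewrite visible_perimeterE.
apply: le_trans (leeD (leeD (leeD (Hbottom dyi) Hright) (Htop dyt)) Hleft) _.
by rewrite -!EFinD lee_fin -Hsum; lra.
Qed.

End FrontNeighbours.
End Visibility.

Theorem lemma11 (R : realType) (w h : R) (k n : nat) (y x : nat -> R)
    (prec : nat -> nat -> Prop) (i : nat) :
  1 < w <= 2 -> 1 < h -> (2 <= k)%N ->
  1/2 <= y 1%N -> y n <= h - 1/2 ->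
  (forall j, (1 <= j < n)%N -> y j.+1 - y j = 1 / k%:R) ->
  layout w n x prec ->
  reasonable (1 / k%:R) n x y prec ->
  (1 < i < n)%N -> prec i i.-1 -> prec i i.+1 ->
  standard_bad_square n x y prec i.
Proof.
move=> /andP[_ w2] _ k2 _ _ y_step Hlayout Hreasonable /andP[i1 iN] Pim Pip.
have [_ order] := Hlayout.
set e := 1 / k%:R in y_step Hreasonable.
have e01 : 0 <= e <= 1/2.
  by rewrite divr_ge0 ?ler0n //= /e !div1r lef_pV2 ?posrE ?ltr0n ?ler_nat //; lia.
have Ii : idx n i by rewrite /idx; lia.
have step_low : y i - y i.-1 = e by have := y_step i.-1; rewrite prednK; [apply; lia | lia].
have step_up : y i.+1 - y i = e by apply: y_step; lia.
have Ilow : in_front_at n y prec i i.-1 (- e) by split; [rewrite /idx; lia | done | lra].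
have Iup : in_front_at n y prec i i.+1 e by split; [rewrite /idx; lia | done | lra].
have near j l : idx n j -> idx n l -> `|x j - x l| <= 1.
  by move=> Ij Il; apply: le_trans (layout_centre_dist Hlayout Ij Il) _; lra.
have [Im _ _] := Ilow; have [Ip _ _] := Iup.
have [same|opposite] := eqVneq (x i <= x i.-1) (x i <= x i.+1).
  exact: (standard_bad_of_front_neighbours_same_side order Ii Ilow Iup e01
    (near _ _ Im Ii) (near _ _ Ip Ii) same).
have := visible_perimeter_le_front_neighbours_opposite order Ii Ilow Iup e01
  (near _ _ Im Ii) (near _ _ Ip Ii) opposite.
move=> /(leeB)/(_ (lexx 2%:E))/(lt_le_trans (Hreasonable i Ii)).
by rewrite -EFinB lte_fin; have := near _ _ Im Ip; lra.
Qed.
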